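(* Let $L_1,L_2\in\mathcal L_n$. Then $L_1\preceq_B L_2$ if and only if $H(L_1)-H(L_2)$ is a (possibly empty) sum of contiguous positive T-blocks. Moreover, if $L_1$ is obtained from $L_2$ by a single contiguous decreasing intercalate switch of consecutive integers, i.e. there are $i,j\in[n-1]$ and $a\in[n-1]$ with $(L_2)_{i,j}=(L_2)_{i+1,j+1}=a+1$, $(L_2)_{i,j+1}=(L_2)_{i+1,j}=a$, while $(L_1)_{i,j}=(L_1)_{i+1,j+1}=a$, $(L_1)_{i,j+1}=(L_1)_{i+1,j}=a+1$ and $L_1,L_2$ agree in all other cells, then $L_2$ covers $L_1$ in $(\mathcal L_n,\preceq_B)$.
   Context: Let $[n]=\{1,\dots,n\}$. A Latin square of order $n$ is an $n\times n$ array with entries in $[n]$ in which each symbol occurs exactly once in each row and each column; $\mathcal L_n$ is the set of them. A hypermatrix of order $n$ is an integer array $A=(A_{i,j,k})_{i,j,k\in[n]}$. For $L\in\mathcal L_n$, $H(L)$ is the hypermatrix with $H(L)_{i,j,k}=1$ if $L_{i,j}=k$ and $0$ otherwise. For $i_1<i_2$, $j_1<j_2$, $k_1<k_2$ in $[n]$, the positive T-block on $\{i_1,i_2\}\times\{j_1,j_2\}\times\{k_1,k_2\}$ is the hypermatrix that is zero outside these eight positions, with entries $+1$ at $(i_1,j_1,k_1),(i_2,j_2,k_1),(i_1,j_2,k_2),(i_2,j_1,k_2)$ and $-1$ at $(i_1,j_2,k_1),(i_2,j_1,k_1),(i_1,j_1,k_2),(i_2,j_2,k_2)$; it is contiguous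 if $i_2=i_1+1$, $j_2=j_1+1$, $k_2=k_1+1$. For hypermatrices $A,B$ of order $n$, $A\preceq_B B$ means $A-B$ is a (possibly empty) sum of positive T-blocks (the Bruhat order); for Latin squares, $L_1\preceq_B L_2$ means $H(L_1)\preceq_B H(L_2)$. An element $y$ covers $x$ if $x\prec y$ and no $z$ satisfies $x\prec z\prec y$. *)

(* Indices [n] = {1..n} are represented by 'I_n = {0..n-1}. *)
From mathcomp Require Import all_boot all_order all_algebra.
Set Implicit Arguments. Unset Strict Implicit. Unset Printing Implicit Defensive.
Import Order.TTheory GRing.Theory Num.Theory.
Local Open Scope ring_scope.

Definition is_latin (n : nat) (L : 'M['I_n]_n) : Prop :=
  (forall (i k : 'I_n), exists! j : 'I_n, L i j = k) /\
  (forall (j k : 'I_n), exists! i : 'I_n, L i j = k).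

Definition hypermatrix (n : nat) := 'I_n -> 'I_n -> 'I_n -> int.

Definition hm_sub n (A B : hypermatrix n) : hypermatrix n :=
  fun i j k => A i j k - B i j k.

Definition H n (L : 'M['I_n]_n) : hypermatrix n :=
  fun i j k => if L i j == k then 1 else 0.

Record tdata (n : nat) := TData {
  ti1 : 'I_n; ti2 : 'I_n; tj1 : 'I_n; tj2 : 'I_n; tk1 : 'I_n; tk2 : 'I_n }.

Definition tvalid n (t : tdata n) : bool :=
  [&& (ti1 t < ti2 t)%N, (tj1 t < tj2 t)%N & (tk1 t < tk2 t)%N].

Definition tcontig n (t : tdata n) : bool :=
  [&& val (ti2 t) == (val (ti1 t)).+1, val (tj2 t) == (val (tj1 t)).+1
    & val (tk2 t) == (val (tk1 t)).+1].

Definition tblock n (t : tdata n) : hypermatrix n :=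
  fun i j k =>
    let p a b c := [&& i == a, j == b & k == c] in
    if [|| p (ti1 t) (tj1 t) (tk1 t), p (ti2 t) (tj2 t) (tk1 t),
           p (ti1 t) (tj2 t) (tk2 t) | p (ti2 t) (tj1 t) (tk2 t)] then 1
    else if [|| p (ti1 t) (tj2 t) (tk1 t), p (ti2 t) (tj1 t) (tk1 t),
                p (ti1 t) (tj1 t) (tk2 t) | p (ti2 t) (tj2 t) (tk2 t)] then -1
    else 0.

Definition sum_of_tblocks n (P : tdata n -> bool) (A : hypermatrix n) : Prop :=
  exists s : seq (tdata n), all P s /\
    forall i j k, A i j k = \sum_(t <- s) tblock t i j k.

Definition hm_bruhat n (A B : hypermatrix n) : Prop :=
  sum_of_tblocks (@tvalid n) (hm_sub A B).

Definition latin_bruhat n (L1 L2 : 'M['I_n]_n) : Prop :=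
  hm_bruhat (H L1) (H L2).

Definition latin_bruhat_lt n (L1 L2 : 'M['I_n]_n) : Prop :=
  latin_bruhat L1 L2 /\ L1 <> L2.

Definition latin_covers n (L1 L2 : 'M['I_n]_n) : Prop :=
  latin_bruhat_lt L1 L2 /\
  ~ (exists Z : 'M['I_n]_n, is_latin Z /\ latin_bruhat_lt L1 Z /\ latin_bruhat_lt Z L2).

From mathcomp Require Import all_boot all_order all_algebra.
From mathcomp Require Import zify ring.
Set Implicit Arguments. Unset Strict Implicit. Unset Printing Implicit Defensive.
Import Order.TTheory GRing.Theory Num.Theory.
Local Open Scope ring_scope.

(* A T-block on {i1,i2} x {j1,j2} x {k1,k2} is the tensor product of the three
   vectors e_i1 - e_i2, e_j1 - e_j2, e_k1 - e_k2.  Each factor telescopes into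
   differences of consecutive unit vectors, so expanding the product writes a
   T-block as a sum of contiguous ones.  For the covering statement, the linear
   functional A |-> - sum A_ijk * i * j * k takes the value
   (i2 - i1)(j2 - j1)(k2 - k1) >= 1 on every positive T-block, hence is a
   positive integer on H(L1) - H(L2) whenever L1 <_B L2.  A contiguous switch
   has value 1, which is not the sum of the values of two strict steps
   L1 <_B Z <_B L2. *)

Section TBlocks.
Variable n : nat.
Implicit Types (a b d x : 'I_n) (t : tdata n) (A B : hypermatrix n).

Definition indicator_diff a b x : int := (x == a)%:Z - (x == b)%:Z.

Lemma tblockE t i j k : tvalid t ->
  tblock t i j k = indicator_diff (ti1 t) (ti2 t) i *
    indicator_diff (tj1 t) (tj2 t) j * indicator_diff (tk1 t) (tk2 t) k.
Proof.
have excl a b x : (a < b)%N -> ~~ ((x == a) && (x == b)).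
  by move=> ab; apply/negP => /andP [/eqP xa /eqP xb]; move: ab; rewrite -xa -xb ltnn.
case/and3P => /excl hi /excl hj /excl hk; rewrite /tblock /indicator_diff.
move: (hi i) (hj j) (hk k).
by case: (i == _); case: (i == _); case: (j == _); case: (j == _);
   case: (k == _); case: (k == _).
Qed.

(* The default [d] is only returned for [m >= n], which never occurs below. *)
Definition ord_at d (m : nat) : 'I_n := insubd d m.

Lemma ord_at_step d b (m : nat) : (m < b)%N ->
  val (ord_at d m) = m /\ val (ord_at d m.+1) = m.+1.
Proof.
move=> mb; have m1n : (m.+1 < n)%N := leq_ltn_trans mb (ltn_ord b).
by rewrite /ord_at !val_insubd m1n (ltnW m1n).
Qed.

Lemma indicator_diff_telescope d a b x : (a <= b)%N ->
  \sum_(a <= m < b) indicator_diff (ord_at d m) (ord_at d m.+1) x =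
  indicator_diff a b x.
Proof.
move=> ab; rewrite (telescope_sumr_eq (fun m => - (val x == m)%:Z)) //.
  by rewrite /indicator_diff opprK addrC.
move=> m /andP [_ mb]; have [e1 e2] := ord_at_step d mb.
by rewrite /indicator_diff -!(inj_eq val_inj) e1 e2 opprK addrC.
Qed.

Definition contiguous_split t : seq (tdata n) :=
  let c := ord_at (ti1 t) in
  [seq TData (c p) (c p.+1) (c qr.1) (c qr.1.+1) (c qr.2) (c qr.2.+1)
  | p <- index_iota (ti1 t) (ti2 t),
    qr <- [seq (q, r) | q <- index_iota (tj1 t) (tj2 t),
                        r <- index_iota (tk1 t) (tk2 t)]].

Lemma contiguous_split_contig t :
  all (fun u => tvalid u && tcontig u) (contiguous_split t).
Proof.
apply/all_allpairsP => p qr /[!mem_index_iota] /andP [_ hp].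
case/allpairsP => -[q r] [/[!mem_index_iota] /andP [_ hq] /andP [_ hr] ->] /=.
have [pE p1E] := ord_at_step (ti1 t) hp; have [qE q1E] := ord_at_step (ti1 t) hq.
have [rE r1E] := ord_at_step (ti1 t) hr.
by rewrite /tvalid /tcontig /= pE p1E qE q1E rE r1E !ltnSn !eqxx.
Qed.

Lemma contiguous_split_sum t i j k : tvalid t ->
  \sum_(u <- contiguous_split t) tblock u i j k = tblock t i j k.
Proof.
move=> vt; have /and3P [/ltnW hi /ltnW hj /ltnW hk] := vt.
rewrite big_allpairs_dep tblockE //.
rewrite -(indicator_diff_telescope (ti1 t) i hi) -(indicator_diff_telescope (ti1 t) j hj).
rewrite -(indicator_diff_telescope (ti1 t) k hk) !mulr_suml.
apply: eq_big_nat => p /andP [_ hp].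
rewrite big_allpairs -mulrA mulr_suml mulr_sumr; apply: eq_big_nat => q /andP [_ hq].
rewrite !mulr_sumr; apply: eq_big_nat => r /andP [_ hr].
have [pE p1E] := ord_at_step (ti1 t) hp; have [qE q1E] := ord_at_step (ti1 t) hq.
have [rE r1E] := ord_at_step (ti1 t) hr.
by rewrite tblockE ?mulrA // /tvalid /= pE p1E qE q1E rE r1E !ltnSn.
Qed.

Lemma sum_of_tblocks_contiguous A :
  sum_of_tblocks (@tvalid n) A <->
  sum_of_tblocks (fun t => tvalid t && tcontig t) A.
Proof.
split=> -[s [vs As]]; last first.
  by exists s; split=> //; apply: sub_all vs => t /andP [].
exists (flatten (map contiguous_split s)); split.
  elim: s {As} vs => //= t s IHs /andP [vt vs].
  by rewrite all_cat contiguous_split_contig IHs.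
move=> i j k; rewrite As big_flatten big_map.
elim: s {As} vs => [|t s IHs] /=; first by rewrite !big_nil.
case/andP => vt vs.
by rewrite !big_cons contiguous_split_sum ?IHs.
Qed.

Definition potential A : int :=
  \sum_i \sum_j \sum_k A i j k * - ((val i)%:Z * (val j)%:Z * (val k)%:Z).

Lemma eq_potential A B :
  (forall i j k, A i j k = B i j k) -> potential A = potential B.
Proof.
move=> AB; apply: eq_bigr => i _; apply: eq_bigr => j _.
by apply: eq_bigr => k _; rewrite AB.
Qed.

Lemma potentialD A B :
  potential (fun i j k => A i j k + B i j k) = potential A + potential B.
Proof.
rewrite -big_split; apply: eq_bigr => i _; rewrite -big_split; apply: eq_bigr => j _.
by rewrite -big_split; apply: eq_bigr => k _; rewrite mulrDl.
Qed.

Lemma potential_sum (s : seq (tdata n)) :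
  potential (fun i j k => \sum_(t <- s) tblock t i j k) =
  \sum_(t <- s) potential (tblock t).
Proof.
elim: s => [|t s IHs].
  rewrite big_nil /potential big1 // => i _; rewrite big1 // => j _.
  by rewrite big1 // => k _; rewrite big_nil mul0r.
by rewrite big_cons -IHs -potentialD; apply: eq_potential => i j k; rewrite big_cons.
Qed.

Lemma sum_indicator_diff_val a b :
  \sum_x indicator_diff a b x * (val x)%:Z = (val a)%:Z - (val b)%:Z.
Proof.
have sum_eq c : \sum_x (x == c)%:Z * (val x)%:Z = (val c)%:Z.
  by rewrite (bigD1 c) //= eqxx mul1r big1 ?addr0 // => x /negbTE ->; rewrite mul0r.
under eq_bigr do rewrite mulrBl.
by rewrite sumrB !sum_eq.
Qed.

Lemma potential_tblock t : tvalid t ->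
  potential (tblock t) = ((val (ti2 t))%:Z - (val (ti1 t))%:Z) *
    ((val (tj2 t))%:Z - (val (tj1 t))%:Z) * ((val (tk2 t))%:Z - (val (tk1 t))%:Z).
Proof.
move=> vt; rewrite /potential.
set di := indicator_diff (ti1 t) (ti2 t); set dj := indicator_diff (tj1 t) (tj2 t).
set dk := indicator_diff (tk1 t) (tk2 t).
transitivity ((\sum_i - (di i * (val i)%:Z)) * (\sum_j dj j * (val j)%:Z) *
              (\sum_k dk k * (val k)%:Z)).
  rewrite -mulrA mulr_suml; apply: eq_bigr => i _.
  rewrite mulr_suml mulr_sumr; apply: eq_bigr => j _.
  rewrite !mulr_sumr; apply: eq_bigr => k _.
  by rewrite tblockE //; ring.
by rewrite sumrN !sum_indicator_diff_val; ring.
Qed.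

Lemma potential_tblock_gt0 t : tvalid t -> 0 < potential (tblock t).
Proof.
move=> vt; rewrite potential_tblock //; case/and3P: vt => hi hj hk.
by rewrite !mulr_gt0 // subr_gt0 ltz_nat.
Qed.

Lemma potential_ge_size A (s : seq (tdata n)) : all (@tvalid n) s ->
  (forall i j k, A i j k = \sum_(t <- s) tblock t i j k) ->
  (size s)%:Z <= potential A.
Proof.
move=> vs /eq_potential ->; rewrite potential_sum.
elim: s vs => [|t s IHs] /=; first by rewrite big_nil.
case/andP => vt vs; rewrite big_cons -add1n PoszD.
by apply: lerD; [exact: potential_tblock_gt0 | exact: IHs].
Qed.

End TBlocks.

Lemma H_subr0_eq n (L1 L2 : 'M['I_n]_n) :
  (forall i j k, hm_sub (H L1) (H L2) i j k = 0) -> L1 = L2.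
Proof.
move=> D; apply/matrixP => i j; have := D i j (L1 i j).
by rewrite /hm_sub /H eqxx; case: eqP.
Qed.

Lemma potential_hm_sub_split n (A B C : hypermatrix n) :
  potential (hm_sub A C) = potential (hm_sub A B) + potential (hm_sub B C).
Proof.
by rewrite -potentialD; apply: eq_potential => i j k; rewrite /hm_sub addrA subrK.
Qed.

Lemma potential_bruhat_lt_gt0 n (L1 L2 : 'M['I_n]_n) :
  latin_bruhat_lt L1 L2 -> 0 < potential (hm_sub (H L1) (H L2)).
Proof.
case=> -[[|t s] [vs Ds]] L12.
  by case: L12; apply: H_subr0_eq => i j k; rewrite Ds big_nil.
exact: lt_le_trans (potential_ge_size vs Ds).
Qed.

Lemma latin_covers_of_potential_eq1 n (L1 L2 : 'M['I_n]_n) :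
  latin_bruhat_lt L1 L2 -> potential (hm_sub (H L1) (H L2)) = 1 ->
  latin_covers L1 L2.
Proof.
move=> lt12 P1; split=> // -[Z [_ [lt1Z ltZ2]]].
move: P1; rewrite (potential_hm_sub_split _ (H Z)).
have := potential_bruhat_lt_gt0 lt1Z; have := potential_bruhat_lt_gt0 ltZ2; lia.
Qed.

Lemma ord_succ_neq n (x y : 'I_n) : val y = (val x).+1 -> x != y.
Proof. by move=> e; apply/eqP => xy; move: e; rewrite xy; lia. Qed.

Section IntercalateSwitch.
Variables (n : nat) (L1 L2 : 'M['I_n]_n) (i i' j j' a a' : 'I_n).
Hypotheses (ii' : val i' = (val i).+1) (jj' : val j' = (val j).+1)
           (aa' : val a' = (val a).+1).
Hypotheses (L2ij : L2 i j = a') (L2i'j' : L2 i' j' = a') (L2ij' : L2 i j' = a)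
           (L2i'j : L2 i' j = a).
Hypotheses (L1ij : L1 i j = a) (L1i'j' : L1 i' j' = a) (L1ij' : L1 i j' = a')
           (L1i'j : L1 i' j = a').
Hypothesis L1_out : forall r c : 'I_n,
  ~~ ((r \in [:: i; i']) && (c \in [:: j; j'])) -> L1 r c = L2 r c.

Let t0 := TData i i' j j' a a'.

Let t0_valid : tvalid t0.
Proof. by rewrite /tvalid /= ii' jj' aa' !ltnSn. Qed.

Lemma hm_sub_switchE r c k : hm_sub (H L1) (H L2) r c k = tblock t0 r c k.
Proof.
have ii'F := negbTE (ord_succ_neq ii'); have jj'F := negbTE (ord_succ_neq jj').
rewrite tblockE // /hm_sub /H /indicator_diff /=.
have [/andP [ri cj] | out] := boolP ((r \in [:: i; i']) && (c \in [:: j; j'])).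
  move: ri cj; rewrite !inE => /orP [] /eqP -> /orP [] /eqP ->;
  rewrite ?L1ij ?L1i'j' ?L1ij' ?L1i'j ?L2ij ?L2i'j' ?L2ij' ?L2i'j
    ?eqxx ?(eq_sym i') ?(eq_sym j') ?ii'F ?jj'F !(eq_sym k);
  by case: (a == k); case: (a' == k).
rewrite L1_out // subrr; move: out; rewrite negb_and !inE.
by case/orP => /norP [/negbTE -> /negbTE ->]; rewrite subrr ?mulr0 ?mul0r.
Qed.

Lemma intercalate_switch_covers : latin_covers L1 L2.
Proof.
apply: latin_covers_of_potential_eq1.
  split.
    exists [:: t0]; split=> [|r c k]; first by rewrite /= t0_valid.
    by rewrite big_seq1 hm_sub_switchE.
  move=> L12; move: L1ij; rewrite L12 L2ij; apply/eqP; rewrite eq_sym.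
  exact: ord_succ_neq.
rewrite (@eq_potential _ _ (tblock t0)); last exact: hm_sub_switchE.
by rewrite potential_tblock //= ii' jj' aa' !intS !addrK.
Qed.

End IntercalateSwitch.

Theorem mainTheorem2 (n : nat) (L1 L2 : 'M['I_n]_n) :
  is_latin L1 -> is_latin L2 ->
  (latin_bruhat L1 L2 <->
     sum_of_tblocks (fun t => tvalid t && tcontig t) (hm_sub (H L1) (H L2))) /\
  (forall i i' j j' a a' : 'I_n,
     val i' = (val i).+1 -> val j' = (val j).+1 -> val a' = (val a).+1 ->
     L2 i j = a' -> L2 i' j' = a' -> L2 i j' = a -> L2 i' j = a ->
     L1 i j = a -> L1 i' j' = a -> L1 i j' = a' -> L1 i' j = a' ->
     (forall r c : 'I_n, ~~ ((r \in [:: i; i']) && (c \in [:: j; j'])) ->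
        L1 r c = L2 r c) ->
     latin_covers L1 L2).
Proof.
move=> _ _; split; first exact: sum_of_tblocks_contiguous.
exact: intercalate_switch_covers.
Qed.
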